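(* Let $C\subset \mathbb{C}P^2$ be the Klein quartic $\{(X:Y:Z): X^3Y+Y^3Z+Z^3X=0\}$, with affine coordinates $x=X^3Y^{-2}Z^{-1}+1$, $y=-XY^{-1}$, so that $y^7=x(1-x)^2$ on $C$. Let $\zeta_7=\exp(2\pi\sqrt{-1}/7)$, let $e_0\colon[0,1]\to C$ be the path $e_0(t)=(t,\sqrt[7]{t(1-t)^2})$ (real nonnegative seventh root), let $\sigma\colon C\to C$ be the automorphism $\sigma(x,y)=(x,\zeta_7 y)$, and for $k=0,1,\dots,7$ let $\ell_k$ be the loop $\sigma^{k-1}_\ast(e_0)\cdot\sigma^{k}_\ast(e_0)^{-1}$ (first traverse $\sigma^{k-1}\circ e_0$, then $\sigma^k\circ e_0$ backwards). Let $\omega'_1=(1-x)\,dx/y^6$, $\omega'_2=(1-x)\,dx/y^5$, $\omega'_3=dx/y^3$, let $(h_1,h_2,h_3,h_4)=(1/7,2/7,4/7,1/7)$ and $\xi_i=\zeta_7^{7h_i}$. Then for $i=1,2,3$ and every $k$, $$\int_{\ell_k}\omega'_i=(\xi_i^{k-1}-\xi_i^{k})\,B(h_i,h_{i+1}),$$ where $B(u,v)=\int_0^1 t^{u-1}(1-t)^{v-1}\,dt$ is the beta function.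
   Context: The forms $\omega'_1,\omega'_2,\omega'_3$ form a basis of the holomorphic $1$-forms on the genus-$3$ curve $C$. Thus $\xi_1=\zeta_7$, $\xi_2=\zeta_7^2$, $\xi_3=\zeta_7^4$. *)

From Stdlib Require Import Reals ZArith.
From Coquelicot Require Export Coquelicot.
Open Scope R_scope.

Definition Cpowz (z : C) (n : Z) : C :=
  match n with
  | Z0 => RtoC 1
  | Zpos p => Cpow z (Pos.to_nat p)
  | Zneg p => Cinv (Cpow z (Pos.to_nat p))
  end.

Definition zeta7 : C := (cos (2 * PI / 7), sin (2 * PI / 7)).

Definition klein_quartic (X Y Z : C) : Prop :=
  (Cpow X 3 * Y + Cpow Y 3 * Z + Cpow Z 3 * X)%C = RtoC 0.
Definition affine_coords (X Y Z : C) : C * C :=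
  ((Cpow X 3 / (Cpow Y 2 * Z) + RtoC 1)%C, (- (X / Y))%C).
Definition klein_affine (p : C * C) : Prop :=
  Cpow (snd p) 7 = (fst p * Cpow (RtoC 1 - fst p) 2)%C.

Definition sigma (p : C * C) : C * C := (fst p, (zeta7 * snd p)%C).
Definition sigma_pow (j : Z) (p : C * C) : C * C := (fst p, (Cpowz zeta7 j * snd p)%C).

Definition root7 (a : R) : R := if Rlt_dec 0 a then Rpower a (1/7) else 0.

Definition e0 (t : R) : C * C := (RtoC t, RtoC (root7 (t * (1 - t) ^ 2))).

(* A path is gamma : R -> C*C considered on [0,1]; the forms have poles at
   the endpoints, so the integral is the improper integral over (0,1):
   int_gamma f dx = lim int_a^b f(gamma t) (x o gamma)'(t) dt, a->0+, b->1-. *)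
Definition is_line_int (f : C * C -> C) (gamma : R -> C * C) (v : C) : Prop :=
  exists dx : R -> C,
    (forall t, 0 < t < 1 ->
       @is_derive R_AbsRing C_R_NormedModule (fun s => fst (gamma s)) t (dx t)) /\
    @is_RInt_gen C_R_NormedModule (fun t => (dx t * f (gamma t))%C)
      (at_right 0) (at_left 1) v.

(* Integral along the composite loop gamma1 . gamma2^{-1}
   (first gamma1, then gamma2 backwards). *)
Definition is_loop_int (f : C * C -> C) (gamma1 gamma2 : R -> C * C) (v : C) : Prop :=
  exists v1 v2, is_line_int f gamma1 v1 /\ is_line_int f gamma2 v2 /\ v = (v1 - v2)%C.

Definition is_int_over_lk (f : C * C -> C) (k : Z) (v : C) : Prop :=
  is_loop_int f (fun t => sigma_pow (k - 1) (e0 t)) (fun t => sigma_pow k (e0 t)) v.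

(* The forms omega'_1 = (1-x)dx/y^6, omega'_2 = (1-x)dx/y^5, omega'_3 = dx/y^3
   (coefficient of dx). *)
Definition omega' (i : nat) (p : C * C) : C :=
  match i with
  | 1%nat => ((RtoC 1 - fst p) / Cpow (snd p) 6)%C
  | 2%nat => ((RtoC 1 - fst p) / Cpow (snd p) 5)%C
  | 3%nat => (RtoC 1 / Cpow (snd p) 3)%C
  | _ => RtoC 0
  end.

Definition seven_h (i : nat) : Z :=
  match i with 1%nat => 1%Z | 2%nat => 2%Z | 3%nat => 4%Z | 4%nat => 1%Z | _ => 0%Z end.
Definition h (i : nat) : R := IZR (seven_h i) / 7.
Definition xi (i : nat) : C := Cpowz zeta7 (seven_h i).

Definition Beta (u v : R) : R :=
  RInt_gen (fun t => Rpower t (u - 1) * Rpower (1 - t) (v - 1)) (at_right 0) (at_left 1).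

From Stdlib Require Import Reals ZArith Lra Lia.
From Coquelicot Require Import Coquelicot.

(* On the path sigma^j o e0 the coordinate y is zeta_7^j times the positive real
   r(t) = (t (1-t)^2)^(1/7).  Each omega'_i is (1-x)^e dx / y^m with m + 7 h_i = 7,
   so it is an eigenform of sigma with eigenvalue xi_i, and on e0 itself it is the
   Beta integrand t^(h_i - 1) (1-t)^(h_(i+1) - 1) dt.  Hence the integral over
   sigma^j o e0 is xi_i^j B(h_i, h_(i+1)), and the loop integral is a difference of
   two such.  The improper Beta integrals converge because 0 < h_i <= 1: near each
   endpoint the integrand is at most twice an integrable power, which gives the
   Cauchy criterion at both ends. *)

Lemma at_right_interval (a d : R) : 0 < d -> at_right a (fun x => a < x < a + d).
Proof.
  intros Hd. exists (mkposreal d Hd). intros x Hx Hax.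
  change (Rabs (x - a) < d) in Hx. apply Rabs_def2 in Hx. lra.
Qed.

Lemma at_left_interval (b d : R) : 0 < d -> at_left b (fun x => b - d < x < b).
Proof.
  intros Hd. exists (mkposreal d Hd). intros x Hx Hxb.
  change (Rabs (x - b) < d) in Hx. apply Rabs_def2 in Hx. simpl in Hx. lra.
Qed.

Lemma filter_prod_ends_inside (a b : R) : a < b ->
  filter_prod (at_right a) (at_left b) (fun ab => a < fst ab < b /\ a < snd ab < b).
Proof.
  intros Hab.
  apply Filter_prod with (fun x => a < x < a + (b - a)) (fun y => b - (b - a) < y < b).
  - apply at_right_interval; lra.
  - apply at_left_interval; lra.
  - intros x y Hx Hy; simpl; lra.
Qed.

Section ImproperIntegralCauchy.

Variables (f : R -> R) (a b : R).
Hypothesis a_lt_b : a < b.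
Hypothesis ex_RInt_f : forall x y, a < x < b -> a < y < b -> ex_RInt f x y.
Hypothesis RInt_small_near_a : forall eps, 0 < eps -> exists d, 0 < d /\
  forall x y, a < x < a + d -> a < y < a + d -> Rabs (RInt f x y) < eps.
Hypothesis RInt_small_near_b : forall eps, 0 < eps -> exists d, 0 < d /\
  forall x y, b - d < x < b -> b - d < y < b -> Rabs (RInt f x y) < eps.

Lemma RInt_has_limit_at_ends :
  exists l : R_CompleteSpace, filterlim (fun ab => RInt f (fst ab) (snd ab))
    (filter_prod (at_right a) (at_left b)) (locally l).
Proof.
  apply (filterlim_locally_cauchy (U := R_CompleteSpace)).
  intros [eps Heps].
  destruct (RInt_small_near_a (eps / 2)) as [da [Hda Ha]]; [lra|].
  destruct (RInt_small_near_b (eps / 2)) as [db [Hdb Hb]]; [lra|].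
  exists (fun ab => (a < fst ab < b /\ a < snd ab < b) /\
                    a < fst ab < a + da /\ b - db < snd ab < b).
  split.
  - apply filter_and; [apply filter_prod_ends_inside, a_lt_b|].
    apply Filter_prod with (fun x => a < x < a + da) (fun y => b - db < y < b);
      auto using at_right_interval, at_left_interval.
  - intros [u1 v1] [u2 v2] [[Hu1 Hv1] [Ha1 Hb1]] [[Hu2 Hv2] [Ha2 Hb2]]; simpl in *.
    change (Rabs (RInt f u2 v2 - RInt f u1 v1) < eps).
    assert (Hsplit : RInt f u2 v2 - RInt f u1 v1 = RInt f u2 u1 + RInt f v1 v2).
    { rewrite <- (RInt_Chasles f u2 u1 v2), <- (RInt_Chasles f u1 v1 v2) by auto.
      change plus with Rplus. ring. }
    rewrite Hsplit.
    apply Rle_lt_trans with (1 := Rabs_triang _ _).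
    specialize (Ha u2 u1 Ha2 Ha1). specialize (Hb v1 v2 Hb1 Hb2). lra.
Qed.

Lemma ex_RInt_gen_cauchy : ex_RInt_gen f (at_right a) (at_left b).
Proof.
  destruct RInt_has_limit_at_ends as [l Hl].
  exists l. intros P HP. unfold filtermapi.
  apply filter_imp with
    (fun ab => P (RInt f (fst ab) (snd ab)) /\ (a < fst ab < b /\ a < snd ab < b)).
  - intros [u v] [HPuv [Hu Hv]]. exists (RInt f u v). simpl in *.
    split; [|exact HPuv]. apply (RInt_correct (V := R_CompleteNormedModule)), ex_RInt_f; auto.
  - apply filter_and; [apply Hl, HP | apply filter_prod_ends_inside, a_lt_b].
Qed.

End ImproperIntegralCauchy.

Definition beta_integrand (a b t : R) : R := Rpower t (a - 1) * Rpower (1 - t) (b - 1).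

Lemma beta_integrand_nonneg (a b t : R) : 0 <= beta_integrand a b t.
Proof. unfold beta_integrand, Rpower. apply Rmult_le_pos; left; apply exp_pos. Qed.

Lemma beta_integrand_reflect (a b t : R) : beta_integrand a b (1 - t) = beta_integrand b a t.
Proof. unfold beta_integrand. replace (1 - (1 - t)) with t by ring. apply Rmult_comm. Qed.

Lemma ex_RInt_beta_integrand (a b x y : R) :
  0 < x < 1 -> 0 < y < 1 -> ex_RInt (beta_integrand a b) x y.
Proof.
  intros Hx Hy. apply (ex_RInt_continuous (V := R_CompleteNormedModule)).
  intros t Ht. assert (0 < t < 1) by (unfold Rmin, Rmax in Ht; destruct Rle_dec; lra).
  apply (ex_derive_continuous (V := R_NormedModule)).
  unfold beta_integrand, Rpower. auto_derive. lra.
Qed.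

Lemma Rpower_le_2 (u c : R) : 1 / 2 <= u -> u <= 1 -> -1 <= c <= 0 -> Rpower u c <= 2.
Proof.
  intros Hu1 Hu2 Hc. unfold Rpower. rewrite <- (exp_ln 2) by lra.
  assert (ln (1 / 2) <= ln u) by (apply ln_le; lra).
  assert (ln u <= 0) by (rewrite <- ln_1; apply ln_le; lra).
  replace (ln (1 / 2)) with (- ln 2) in * by (unfold Rdiv; rewrite Rmult_1_l, ln_Rinv; lra).
  assert (Hle : c * ln u <= ln 2) by nra.
  destruct (Rle_lt_or_eq_dec _ _ Hle) as [Hlt | ->].
  - left. apply exp_increasing, Hlt.
  - right. reflexivity.
Qed.

Lemma beta_integrand_le_near_0 (a b t : R) :
  0 <= b <= 1 -> 0 < t <= 1 / 2 -> beta_integrand a b t <= 2 * Rpower t (a - 1).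
Proof.
  intros Hb Ht. unfold beta_integrand. rewrite (Rmult_comm 2).
  apply Rmult_le_compat_l; [unfold Rpower; left; apply exp_pos|].
  apply Rpower_le_2; lra.
Qed.

Lemma RInt_beta_integrand_le_near_0 (a b x y : R) : 0 < a -> 0 <= b <= 1 ->
  0 < x <= y -> y <= 1 / 2 -> RInt (beta_integrand a b) x y <= 2 / a * Rpower y a.
Proof.
  intros Ha Hb Hxy Hy.
  assert (Hderiv : forall t, 0 < t ->
    is_derive (fun s => 2 / a * Rpower s a) t (2 * Rpower t (a - 1))).
  { intros t Ht.
    replace (2 * Rpower t (a - 1)) with (2 / a * (a * Rpower t (a - 1))) by (field; lra).
    apply is_derive_scal, is_derive_Reals, derivable_pt_lim_power, Ht. }
  assert (Hprim : is_RInt (fun t => 2 * Rpower t (a - 1)) x y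
                    (minus (2 / a * Rpower y a) (2 / a * Rpower x a))).
  { apply (is_RInt_derive (V := R_CompleteNormedModule) (fun s => 2 / a * Rpower s a));
      intros t Ht; assert (0 < t) by (unfold Rmin in Ht; destruct Rle_dec; lra).
    - apply Hderiv; lra.
    - apply (ex_derive_continuous (V := R_NormedModule)).
      eexists. apply is_derive_scal, is_derive_Reals, derivable_pt_lim_power; lra. }
  apply Rle_trans with (RInt (fun t => 2 * Rpower t (a - 1)) x y).
  - apply RInt_le; [lra | apply ex_RInt_beta_integrand; lra | eexists; exact Hprim |].
    intros t Ht. apply beta_integrand_le_near_0; lra.
  - rewrite (is_RInt_unique _ _ _ _ Hprim).
    assert (0 <= 2 / a * Rpower x a).
    { apply Rmult_le_pos; [apply Rlt_le, Rdiv_lt_0_compat; lra|].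
      unfold Rpower. left. apply exp_pos. }
    unfold minus, plus, opp; simpl. lra.
Qed.

Lemma RInt_beta_integrand_small_near_0 (a b : R) : 0 < a -> 0 <= b <= 1 ->
  forall eps, 0 < eps -> exists d, 0 < d /\
    forall x y, 0 < x < d -> 0 < y < d -> Rabs (RInt (beta_integrand a b) x y) < eps.
Proof.
  intros Ha Hb eps Heps.
  set (c := Rpower (a * eps / 2) (1 / a)).
  assert (Hc : 0 < c) by (unfold c, Rpower; apply exp_pos).
  assert (Hca : Rpower c a = a * eps / 2).
  { unfold c. rewrite Rpower_mult. replace (1 / a * a) with 1 by (field; lra).
    apply Rpower_1. apply Rdiv_lt_0_compat; [nra | lra]. }
  set (d := Rmin (1 / 2) c).
  assert (Hd : 0 < d) by (apply Rmin_glb_lt; lra).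
  assert (Hd2 : d <= 1 / 2) by apply Rmin_l.
  assert (Hdc : d <= c) by apply Rmin_r.
  assert (Hsmall : forall x y, 0 < x <= y -> y < d ->
            Rabs (RInt (beta_integrand a b) x y) < eps).
  { intros x y Hxy Hy.
    rewrite Rabs_pos_eq.
    2: { apply RInt_ge_0; [lra | apply ex_RInt_beta_integrand; lra |].
         intros; apply beta_integrand_nonneg. }
    eapply Rle_lt_trans; [apply RInt_beta_integrand_le_near_0; lra|].
    assert (Hya : Rpower y a < a * eps / 2) by (rewrite <- Hca; apply Rlt_Rpower_l; lra).
    apply Rmult_lt_compat_l with (r := 2 / a) in Hya; [|apply Rdiv_lt_0_compat; lra].
    replace (2 / a * (a * eps / 2)) with eps in Hya by (field; lra). exact Hya. }
  exists d. split; [exact Hd|]. intros x y Hx Hy.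
  destruct (Rle_dec x y).
  - apply Hsmall; lra.
  - rewrite <- opp_RInt_swap by (apply ex_RInt_beta_integrand; lra).
    unfold opp; simpl. rewrite Rabs_Ropp. apply Hsmall; lra.
Qed.

Lemma RInt_beta_integrand_reflect (a b x y : R) : 0 < x < 1 -> 0 < y < 1 ->
  RInt (beta_integrand a b) x y = RInt (beta_integrand b a) (1 - y) (1 - x).
Proof.
  intros Hx Hy.
  assert (Hlin := RInt_comp_lin (V := R_CompleteNormedModule) (beta_integrand b a) (-1) 1 x y).
  replace (-1 * x + 1) with (1 - x) in Hlin by ring.
  replace (-1 * y + 1) with (1 - y) in Hlin by ring.
  rewrite <- (opp_RInt_swap (beta_integrand b a) (1 - x)), <- Hlin
    by (apply ex_RInt_beta_integrand; lra).
  rewrite (RInt_ext (fun s => scal (-1) (beta_integrand b a (-1 * s + 1)))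
                    (fun s => opp (beta_integrand a b s))).
  2: { intros s _. replace (-1 * s + 1) with (1 - s) by ring.
       rewrite beta_integrand_reflect. unfold scal, opp; simpl; unfold mult; simpl. ring. }
  rewrite (RInt_opp (V := R_CompleteNormedModule)) by (apply ex_RInt_beta_integrand; lra).
  symmetry. apply opp_opp.
Qed.

Lemma RInt_beta_integrand_small_near_1 (a b : R) : 0 <= a <= 1 -> 0 < b ->
  forall eps, 0 < eps -> exists d, 0 < d /\
    forall x y, 1 - d < x < 1 -> 1 - d < y < 1 -> Rabs (RInt (beta_integrand a b) x y) < eps.
Proof.
  intros Ha Hb eps Heps.
  destruct (RInt_beta_integrand_small_near_0 b a Hb Ha eps Heps) as [d [Hd Hsmall]].
  exists (Rmin d 1). split; [apply Rmin_glb_lt; lra|].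
  intros x y Hx Hy. pose proof (Rmin_l d 1). pose proof (Rmin_r d 1).
  rewrite RInt_beta_integrand_reflect by lra. apply Hsmall; lra.
Qed.

Lemma ex_RInt_gen_beta_integrand (a b : R) : 0 < a <= 1 -> 0 < b <= 1 ->
  ex_RInt_gen (beta_integrand a b) (at_right 0) (at_left 1).
Proof.
  intros Ha Hb. apply ex_RInt_gen_cauchy.
  - lra.
  - intros x y Hx Hy. apply ex_RInt_beta_integrand; lra.
  - intros eps Heps.
    destruct (RInt_beta_integrand_small_near_0 a b) with eps as [d [Hd Hsmall]]; try lra.
    exists d. split; [exact Hd|]. intros x y Hx Hy. apply Hsmall; lra.
  - apply RInt_beta_integrand_small_near_1; lra.
Qed.

Lemma is_RInt_gen_Beta (a b : R) : 0 < a <= 1 -> 0 < b <= 1 ->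
  is_RInt_gen (beta_integrand a b) (at_right 0) (at_left 1) (Beta a b).
Proof.
  intros Ha Hb. apply (RInt_gen_correct (V := R_CompleteNormedModule)).
  apply ex_RInt_gen_beta_integrand; assumption.
Qed.

Open Scope C_scope.

Lemma Cpow_cis (x : R) (n : nat) :
  Cpow (cos x, sin x) n = (cos (INR n * x), sin (INR n * x)).
Proof.
  induction n as [|n IHn].
  - simpl. rewrite Rmult_0_l, cos_0, sin_0. reflexivity.
  - rewrite Cpow_S, IHn, S_INR. unfold Cmult; simpl.
    replace ((INR n + 1) * x)%R with (x + INR n * x)%R by ring.
    rewrite cos_plus, sin_plus. f_equal; ring.
Qed.

Lemma zeta7_pow7 : Cpow zeta7 7 = 1.
Proof.
  unfold zeta7. rewrite Cpow_cis.
  replace (INR 7 * (2 * PI / 7))%R with (2 * PI)%R by (simpl; field).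
  rewrite cos_2PI, sin_2PI. reflexivity.
Qed.

Lemma Cmult_eq_1_neq_0 (u v : C) : u * v = 1 -> u <> 0.
Proof. intros Huv ->. rewrite Cmult_0_l in Huv. exact (C1_nz (eq_sym Huv)). Qed.

Lemma zeta7_neq_0 : zeta7 <> 0.
Proof. apply (Cmult_eq_1_neq_0 _ (Cpow zeta7 6)). rewrite <- Cpow_S. exact zeta7_pow7. Qed.

Lemma Cpowz_1_l (j : Z) : Cpowz 1 j = 1.
Proof. destruct j; simpl; rewrite ?Cpow_1_l; [reflexivity | reflexivity | field; exact C1_nz]. Qed.

Lemma Cpow_Cpowz_comm (w : C) (j : Z) (s : nat) :
  w <> 0 -> Cpow (Cpowz w j) s = Cpowz (Cpow w s) j.
Proof.
  intros Hw. destruct j as [|p|p]; simpl.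
  - apply Cpow_1_l.
  - rewrite <- !Cpow_mult_r, Nat.mul_comm. reflexivity.
  - rewrite Cpow_inv by (apply Cpow_nz, Hw).
    rewrite <- !Cpow_mult_r, Nat.mul_comm. reflexivity.
Qed.

Lemma Cpowz_root_of_unity (w : C) (n : nat) (j : Z) :
  Cpow w n = 1 -> Cpow (Cpowz w j) n = 1.
Proof.
  destruct n as [|n]; [reflexivity|]. intros Hw.
  assert (Hw0 : w <> 0) by (apply (Cmult_eq_1_neq_0 _ (Cpow w n)); rewrite <- Cpow_S; exact Hw).
  rewrite Cpow_Cpowz_comm, Hw by exact Hw0. apply Cpowz_1_l.
Qed.

Lemma Cdiv_Cpow_scaled (w y z : C) (m s : nat) :
  Cpow w (m + s) = 1 -> Cpow y m <> 0 ->
  z / Cpow (w * y) m = Cpow w s * (z / Cpow y m).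
Proof.
  intros Hw Hy. rewrite Cpow_add_r in Hw.
  assert (Hwm : Cpow w m <> 0) by exact (Cmult_eq_1_neq_0 _ _ Hw).
  rewrite Cpow_mult_l.
  replace (Cpow w s) with (/ Cpow w m)
    by (rewrite <- (Cmult_1_r (/ _)), <- Hw; field; exact Hwm).
  field. split; assumption.
Qed.

Lemma omega'_sigma_pow (i : nat) (j : Z) (p : C * C) :
  (1 <= i <= 3)%nat -> snd p <> 0 ->
  omega' i (sigma_pow j p) = Cpowz (xi i) j * omega' i p.
Proof.
  intros Hi Hp.
  assert (Hw : Cpow (Cpowz zeta7 j) 7 = 1) by apply Cpowz_root_of_unity, zeta7_pow7.
  (* y^-m becomes (zeta_7^j)^-m y^-m = (zeta_7^j)^(7 h_i) y^-m, as m + 7 h_i = 7. *)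
  destruct i as [|[|[|[|i]]]]; try lia; unfold omega', sigma_pow, xi; simpl fst; simpl snd.
  - change (Cpowz zeta7 (seven_h 1)) with (Cpow zeta7 1).
    rewrite <- Cpow_Cpowz_comm by exact zeta7_neq_0.
    apply (Cdiv_Cpow_scaled _ _ _ 6 1); [exact Hw | apply Cpow_nz, Hp].
  - change (Cpowz zeta7 (seven_h 2)) with (Cpow zeta7 2).
    rewrite <- Cpow_Cpowz_comm by exact zeta7_neq_0.
    apply (Cdiv_Cpow_scaled _ _ _ 5 2); [exact Hw | apply Cpow_nz, Hp].
  - change (Cpowz zeta7 (seven_h 3)) with (Cpow zeta7 4).
    rewrite <- Cpow_Cpowz_comm by exact zeta7_neq_0.
    apply (Cdiv_Cpow_scaled _ _ _ 3 4); [exact Hw | apply Cpow_nz, Hp].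
Qed.

Lemma root7_pos (t : R) : (0 < t < 1)%R -> (0 < root7 (t * (1 - t) ^ 2))%R.
Proof.
  intros Ht. unfold root7. destruct Rlt_dec as [_ | Hn].
  - unfold Rpower. apply exp_pos.
  - exfalso. apply Hn, Rmult_lt_0_compat; [lra | apply pow_lt; lra].
Qed.

Lemma beta_integrand_eq_ratio (a b t : R) (n e : nat) : (0 < t < 1)%R ->
  (a - 1 + INR n / 7 = 0)%R -> (b - 1 + 2 * INR n / 7 = INR e)%R ->
  beta_integrand a b t = ((1 - t) ^ e / root7 (t * (1 - t) ^ 2) ^ n)%R.
Proof.
  intros Ht Ha Hb. assert (Hr := root7_pos t Ht).
  apply (Rmult_eq_reg_r (root7 (t * (1 - t) ^ 2) ^ n));
    [| apply pow_nonzero; lra].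
  unfold Rdiv. rewrite Rmult_assoc, Rinv_l, Rmult_1_r by (apply pow_nonzero; lra).
  unfold root7 in *. destruct Rlt_dec as [Hpos | Hn]; [| lra].
  rewrite <- Rpower_pow, <- (Rpower_pow e) by lra.
  unfold beta_integrand, Rpower.
  rewrite ln_exp, ln_mult, ln_pow by (try apply pow_lt; lra).
  rewrite <- !exp_plus. f_equal.
  replace (INR 2) with 2%R by reflexivity.
  replace (a - 1)%R with (- INR n / 7)%R by lra.
  replace (b - 1)%R with (INR e - 2 * INR n / 7)%R by lra. field.
Qed.

Lemma omega'_e0 (i : nat) (t : R) : (1 <= i <= 3)%nat -> (0 < t < 1)%R ->
  omega' i (e0 t) = RtoC (beta_integrand (h i) (h (S i)) t).
Proof.
  intros Hi Ht. assert (Hr := root7_pos t Ht).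
  destruct i as [|[|[|[|i]]]]; try lia; unfold omega', e0, h, seven_h; simpl fst; simpl snd.
  - rewrite (beta_integrand_eq_ratio _ _ _ 6 1) by (simpl; lra).
    rewrite pow_1, RtoC_div, RtoC_pow, RtoC_minus by (apply pow_nonzero; lra). reflexivity.
  - rewrite (beta_integrand_eq_ratio _ _ _ 5 1) by (simpl; lra).
    rewrite pow_1, RtoC_div, RtoC_pow, RtoC_minus by (apply pow_nonzero; lra). reflexivity.
  - rewrite (beta_integrand_eq_ratio _ _ _ 3 0) by (simpl; lra).
    rewrite pow_O, RtoC_div, RtoC_pow by (apply pow_nonzero; lra). reflexivity.
Qed.

Lemma is_derive_Cmult_RtoC (c : C) (t : R) :
  @is_derive R_AbsRing C_R_NormedModule (fun s => c * RtoC s) t c.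
Proof.
  apply (is_derive_ext (V := C_R_NormedModule) (fun s => scal s c)).
  - intros s. destruct c as [c1 c2].
    unfold scal; simpl; unfold prod_scal, Cmult, RtoC; simpl.
    unfold scal; simpl; unfold mult; simpl. f_equal; ring.
  - apply filterdiff_linear, is_linear_scal_l.
Qed.

Lemma is_RInt_Cmult_RtoC (f : R -> R) (c : C) (a b l : R) :
  is_RInt f a b l -> is_RInt (fun t => c * RtoC (f t)) a b (c * RtoC l).
Proof.
  intros Hf. destruct c as [c1 c2].
  apply (is_RInt_ext (fun t => ((c1 * f t)%R, (c2 * f t)%R))).
  { intros t _. unfold Cmult, RtoC; simpl. f_equal; ring. }
  replace ((c1, c2) * RtoC l) with ((c1 * l)%R, (c2 * l)%R)
    by (unfold Cmult, RtoC; simpl; f_equal; ring).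
  apply (is_RInt_fct_extend_pair (U := R_NormedModule) (V := R_NormedModule)); simpl;
    apply (is_RInt_scal (V := R_NormedModule)), Hf.
Qed.

Lemma is_RInt_gen_Cmult_RtoC {Fa Fb : (R -> Prop) -> Prop}
    {FFa : Filter Fa} {FFb : Filter Fb} (f : R -> R) (c : C) (l : R) :
  is_RInt_gen f Fa Fb l -> is_RInt_gen (fun t => c * RtoC (f t)) Fa Fb (c * RtoC l).
Proof.
  intros Hf P HP.
  assert (Hcont : continuous (fun y : R => c * RtoC y) l).
  { apply (ex_derive_continuous (V := C_R_NormedModule)).
    exists c. apply is_derive_Cmult_RtoC. }
  specialize (Hf (fun y => P (c * RtoC y)) (Hcont P HP)).
  unfold filtermapi in *. eapply filter_imp; [|exact Hf].
  intros ab [y [Hy HPy]]. exists (c * RtoC y).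
  split; [apply is_RInt_Cmult_RtoC, Hy | exact HPy].
Qed.

Lemma h_bounds (i : nat) : (1 <= i <= 4)%nat -> (0 < h i <= 1)%R.
Proof. intros Hi. destruct i as [|[|[|[|[|i]]]]]; try lia; unfold h, seven_h; lra. Qed.

Lemma is_line_int_sigma_pow_e0 (i : nat) (j : Z) : (1 <= i <= 3)%nat ->
  is_line_int (omega' i) (fun t => sigma_pow j (e0 t))
    (Cpowz (xi i) j * RtoC (Beta (h i) (h (S i)))).
Proof.
  intros Hi. exists (fun _ => RtoC 1). split.
  - intros t _. simpl.
    apply (is_derive_ext (V := C_R_NormedModule) (fun s => RtoC 1 * RtoC s)).
    + intros s. apply Cmult_1_l.
    + apply is_derive_Cmult_RtoC.
  - apply (is_RInt_gen_ext
             (fun t => Cpowz (xi i) j * RtoC (beta_integrand (h i) (h (S i)) t))).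
    + eapply filter_imp; [|apply filter_prod_ends_inside; lra].
      intros [u v] [Hu Hv] t Ht. simpl in Hu, Hv, Ht.
      assert (Ht' : (0 < t < 1)%R) by (unfold Rmin, Rmax in Ht; destruct Rle_dec; lra).
      assert (Hy : snd (e0 t) <> 0).
      { intros E. apply RtoC_inj in E. pose proof (root7_pos t Ht'). lra. }
      rewrite Cmult_1_l, omega'_sigma_pow, omega'_e0 by assumption. reflexivity.
    + apply is_RInt_gen_Cmult_RtoC, is_RInt_gen_Beta. all: apply h_bounds; lia.
Qed.

Close Scope C_scope.

Theorem lemma4p1 :
  forall (i : nat) (k : Z),
    (1 <= i <= 3)%nat -> (0 <= k <= 7)%Z ->
    is_int_over_lk (omega' i) k
      ((Cpowz (xi i) (k - 1) - Cpowz (xi i) k) * RtoC (Beta (h i) (h (S i))))%C.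
Proof.
  intros i k Hi _.
  exists (Cpowz (xi i) (k - 1) * RtoC (Beta (h i) (h (S i))))%C,
         (Cpowz (xi i) k * RtoC (Beta (h i) (h (S i))))%C.
  split; [|split]; [apply is_line_int_sigma_pow_e0 ..| ring]; exact Hi.
Qed.
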